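(* Consider an MILP instance $\min\{\mathbf{c}\mathbf{x} \mid A\mathbf{x}=\mathbf{b},\ \mathbf{l}\le\mathbf{x}\le\mathbf{u},\ \mathbf{x}\in\mathbb{Z}^z\times\mathbb{Q}^q\}$ with $A=(A_{\mathbb{Z}}\ A_{\mathbb{Q}})$, $\mathbf{x}=(\mathbf{x}_{\mathbb{Z}},\mathbf{x}_{\mathbb{Q}})$, $\mathbf{c}=(\mathbf{c}_{\mathbb{Z}},\mathbf{c}_{\mathbb{Q}})$, $\mathbf{l}=(\mathbf{l}_{\mathbb{Z}},\mathbf{l}_{\mathbb{Q}})$, $\mathbf{u}=(\mathbf{u}_{\mathbb{Z}},\mathbf{u}_{\mathbb{Q}})$ split into integer and rational parts, which has an optimal solution, and let $M$ be its fractionality and $\tilde M := M!$. Consider the integralized instance $\min\{(\tilde M\mathbf{c}_{\mathbb{Z}},\mathbf{c}_{\mathbb{Q}})\mathbf{z} \mid (\tilde M A_{\mathbb{Z}}\ A_{\mathbb{Q}})\mathbf{z} = \tilde M\mathbf{b},\ (\mathbf{l}_{\mathbb{Z}},\tilde M\mathbf{l}_{\mathbb{Q}}) \le (\mathbf{z}_{\mathbb{Z}},\mathbf{z}_{\mathbb{Q}}) \le (\mathbf{u}_{\mathbb{Z}},\tilde M\mathbf{u}_{\mathbb{Q}}),\ \mathbf{z}\in\mathbb{Z}^{z+q}\}$. If $\mathbf{z}=(\mathbf{z}_{\mathbb{Z}},\mathbf{z}_{\mathbb{Q}})\in\mathbb{Z}^{z+q}$ is an optimal solution of the integralized instance, then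 $\mathbf{x}=(\mathbf{z}_{\mathbb{Z}},\frac{1}{\tilde M}\mathbf{z}_{\mathbb{Q}})$ is an optimal solution of the original MILP instance.
   Context: The fractionality of an MILP instance is the minimum, over all optimal solutions $\mathbf{x}$, of the largest denominator among the entries of $\mathbf{x}$ written in lowest terms. *)

From HB Require Import structures.
From mathcomp Require Import all_boot all_order all_algebra.
Set Implicit Arguments. Unset Strict Implicit. Unset Printing Implicit Defensive.
Import Order.TTheory GRing.Theory Num.Theory.
Local Open Scope ring_scope.

(* Bounds may be infinite: [None] stands for -oo (lower) / +oo (upper). *)
Definition lbok (o : option rat) (v : rat) : bool :=
  if o is Some a then a <= v else true.
Definition ubok (o : option rat) (v : rat) : bool :=
  if o is Some a then v <= a else true.

Definition sbound (s : rat) (o : option rat) : option rat := omap (fun a => s * a) o.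

(* Feasibility for a mixed program with [z] integer-part variables [xZ]
   and [q] rational-part variables [xQ]:
   AZ xZ + AQ xQ = b, l <= x <= u, xZ integral; if [intQ] is true the
   rational-part variables are also required to be integral
   (this is used for the integralized instance, where z in Z^{z+q}). *)
Definition mfeas (intQ : bool) (m z q : nat)
  (AZ : 'M[rat]_(m, z)) (AQ : 'M[rat]_(m, q)) (b : 'cV[rat]_m)
  (lZ uZ : 'I_z -> option rat) (lQ uQ : 'I_q -> option rat)
  (xZ : 'cV[rat]_z) (xQ : 'cV[rat]_q) : Prop :=
  AZ *m xZ + AQ *m xQ = b /\
  (forall i, xZ i 0 \is a Num.int) /\
  (intQ -> forall j, xQ j 0 \is a Num.int) /\
  (forall i, lbok (lZ i) (xZ i 0) && ubok (uZ i) (xZ i 0)) /\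
  (forall j, lbok (lQ j) (xQ j 0) && ubok (uQ j) (xQ j 0)).

Definition mobj (z q : nat) (cZ : 'rV[rat]_z) (cQ : 'rV[rat]_q)
  (xZ : 'cV[rat]_z) (xQ : 'cV[rat]_q) : rat :=
  (cZ *m xZ) 0 0 + (cQ *m xQ) 0 0.

Definition mopt (intQ : bool) (m z q : nat)
  (cZ : 'rV[rat]_z) (cQ : 'rV[rat]_q)
  (AZ : 'M[rat]_(m, z)) (AQ : 'M[rat]_(m, q)) (b : 'cV[rat]_m)
  (lZ uZ : 'I_z -> option rat) (lQ uQ : 'I_q -> option rat)
  (xZ : 'cV[rat]_z) (xQ : 'cV[rat]_q) : Prop :=
  mfeas intQ AZ AQ b lZ uZ lQ uQ xZ xQ /\
  forall yZ yQ, mfeas intQ AZ AQ b lZ uZ lQ uQ yZ yQ ->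
    mobj cZ cQ xZ xQ <= mobj cZ cQ yZ yQ.

Definition maxden (z q : nat) (xZ : 'cV[rat]_z) (xQ : 'cV[rat]_q) : nat :=
  maxn (\max_(i < z) absz (denq (xZ i ord0))) (\max_(j < q) absz (denq (xQ j ord0))).

Definition fractionality (m z q : nat)
  (cZ : 'rV[rat]_z) (cQ : 'rV[rat]_q)
  (AZ : 'M[rat]_(m, z)) (AQ : 'M[rat]_(m, q)) (b : 'cV[rat]_m)
  (lZ uZ : 'I_z -> option rat) (lQ uQ : 'I_q -> option rat) (M : nat) : Prop :=
  (exists xZ xQ, mopt false cZ cQ AZ AQ b lZ uZ lQ uQ xZ xQ /\ maxden xZ xQ = M) /\
  (forall xZ xQ, mopt false cZ cQ AZ AQ b lZ uZ lQ uQ xZ xQ -> (M <= maxden xZ xQ)%N).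

From mathcomp Require Import all_boot all_order all_algebra.
Import Order.TTheory GRing.Theory Num.Theory.
Local Open Scope ring_scope.

(* Substituting x_Q = s^-1 z_Q with s > 0 maps the feasible set and the
   objective of the instance scaled by s bijectively onto those of the
   original one, multiplying the objective by s.  Since M! clears every
   denominator of an optimal solution of fractionality M, its scaled image
   is integral; so an optimum of the integralized instance is no worse
   than that solution, and its unscaled image is optimal. *)

Lemma dvdn_den_mulr_Qint (x : rat) (k : nat) :
  (`|denq x| %| k)%N -> k%:R * x \is a Num.int.
Proof.
case/dvdnP=> t ->; rewrite natrM -mulrA.
have -> : (`|denq x|%:R : rat) = (denq x)%:~R by rewrite natr_absz normr_denq.
by rewrite (mulrC (denq x)%:~R) -numqE rpredM ?rpred_nat ?rpred_int.
Qed.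

Lemma fact_maxden_mulr_Qint (z q : nat) (xZ : 'cV[rat]_z) (xQ : 'cV[rat]_q)
    (n : nat) (j : 'I_q) :
  (maxden xZ xQ <= n)%N -> (n`!)%:R * xQ j 0 \is a Num.int.
Proof.
move=> le_n; apply/dvdn_den_mulr_Qint/dvdn_fact.
rewrite absz_gt0 denq_neq0 /= (leq_trans _ le_n) // leq_max.
have -> : (0 : 'I_1) = ord0 by exact/val_inj.
by rewrite leq_bigmax orbT.
Qed.

Lemma mobj_scale (z q : nat) (s : rat) (cZ : 'rV[rat]_z) (cQ : 'rV[rat]_q)
    (xZ : 'cV[rat]_z) (xQ : 'cV[rat]_q) :
  mobj (s *: cZ) cQ xZ (s *: xQ) = s * mobj cZ cQ xZ xQ.
Proof. by rewrite /mobj -scalemxAl -scalemxAr !mxE mulrDr. Qed.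

Lemma mfeas_true (m z q : nat)
    (AZ : 'M[rat]_(m, z)) (AQ : 'M[rat]_(m, q)) (b : 'cV[rat]_m)
    (lZ uZ : 'I_z -> option rat) (lQ uQ : 'I_q -> option rat)
    (xZ : 'cV[rat]_z) (xQ : 'cV[rat]_q) :
  mfeas true AZ AQ b lZ uZ lQ uQ xZ xQ <->
  mfeas false AZ AQ b lZ uZ lQ uQ xZ xQ /\ forall j, xQ j 0 \is a Num.int.
Proof.
split=> [[hA [hZ [hQ hb]]] | [[hA [hZ [_ hb]]] hQ]].
  by split=> //; apply: hQ.
by do 3!split=> //.
Qed.

Section ScaledInstance.

Variable s : rat.
Hypothesis s_gt0 : 0 < s.

Let s_neq0 : s != 0. Proof. by rewrite gt_eqF. Qed.

Lemma lbok_sbound (o : option rat) (v : rat) :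
  lbok (sbound s o) (s * v) = lbok o v.
Proof. by case: o => [a|] //=; rewrite ler_pM2l. Qed.

Lemma ubok_sbound (o : option rat) (v : rat) :
  ubok (sbound s o) (s * v) = ubok o v.
Proof. by case: o => [a|] //=; rewrite ler_pM2l. Qed.

Variables (m z q : nat) (cZ : 'rV[rat]_z) (cQ : 'rV[rat]_q).
Variables (AZ : 'M[rat]_(m, z)) (AQ : 'M[rat]_(m, q)) (b : 'cV[rat]_m).
Variables (lZ uZ : 'I_z -> option rat) (lQ uQ : 'I_q -> option rat).

Lemma mfeas_scale (xZ : 'cV[rat]_z) (xQ : 'cV[rat]_q) :
  mfeas false (s *: AZ) AQ (s *: b) lZ uZ
    (fun j => sbound s (lQ j)) (fun j => sbound s (uQ j)) xZ (s *: xQ) <->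
  mfeas false AZ AQ b lZ uZ lQ uQ xZ xQ.
Proof.
have eqE : (s *: AZ *m xZ + AQ *m (s *: xQ) = s *: b) <->
           (AZ *m xZ + AQ *m xQ = b).
  rewrite -scalemxAl -scalemxAr -scalerDr.
  by split=> [/(scalerI s_neq0)|->].
have boundsE j : lbok (sbound s (lQ j)) ((s *: xQ) j 0) &&
                 ubok (sbound s (uQ j)) ((s *: xQ) j 0) =
                 lbok (lQ j) (xQ j 0) && ubok (uQ j) (xQ j 0).
  by rewrite mxE lbok_sbound ubok_sbound.
split=> [] [/eqE hA [hZ [_ [hbZ hbQ]]]].
  by do 4!split=> //; move=> j; rewrite -boundsE.
by do 4!split=> //; move=> j; rewrite boundsE.
Qed.

Lemma mopt_unscale (zZ : 'cV[rat]_z) (zQ : 'cV[rat]_q)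
    (xZ : 'cV[rat]_z) (xQ : 'cV[rat]_q) :
  mopt false cZ cQ AZ AQ b lZ uZ lQ uQ xZ xQ ->
  (forall j, s * xQ j 0 \is a Num.int) ->
  mopt true (s *: cZ) cQ (s *: AZ) AQ (s *: b)
    lZ uZ (fun j => sbound s (lQ j)) (fun j => sbound s (uQ j)) zZ zQ ->
  mopt false cZ cQ AZ AQ b lZ uZ lQ uQ zZ (s^-1 *: zQ).
Proof.
move=> [x_feas x_min] sxQ_int [/mfeas_true [z_feas _] z_min].
have zQE : zQ = s *: (s^-1 *: zQ) by rewrite scalerA divff // scale1r.
split=> [|yZ yQ y_feas]; first by apply/mfeas_scale; rewrite -zQE.
apply: le_trans (x_min _ _ y_feas).
rewrite -(ler_pM2l s_gt0) -!mobj_scale -zQE.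
apply: z_min; apply/mfeas_true; split; first exact/mfeas_scale.
by move=> j; rewrite mxE; apply: sxQ_int.
Qed.

End ScaledInstance.

Theorem lemma4 (m z q : nat)
  (cZ : 'rV[rat]_z) (cQ : 'rV[rat]_q)
  (AZ : 'M[rat]_(m, z)) (AQ : 'M[rat]_(m, q)) (b : 'cV[rat]_m)
  (lZ uZ : 'I_z -> option rat) (lQ uQ : 'I_q -> option rat)
  (M : nat)
  (hopt : exists xZ xQ, mopt false cZ cQ AZ AQ b lZ uZ lQ uQ xZ xQ)
  (hM : fractionality cZ cQ AZ AQ b lZ uZ lQ uQ M)
  (zZ : 'cV[rat]_z) (zQ : 'cV[rat]_q) :
  let Mt : rat := (M`!)%:R in
  mopt true (Mt *: cZ) cQ (Mt *: AZ) AQ (Mt *: b)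
       lZ uZ (fun j => sbound Mt (lQ j)) (fun j => sbound Mt (uQ j)) zZ zQ ->
  mopt false cZ cQ AZ AQ b lZ uZ lQ uQ zZ (Mt^-1 *: zQ).
Proof.
move=> Mt; rewrite {}/Mt; have [[xZ [xQ [x_opt x_den]]] _] := hM.
apply: mopt_unscale x_opt _; first by rewrite ltr0n fact_gt0.
by move=> j; apply: (@fact_maxden_mulr_Qint _ _ xZ); rewrite x_den.
Qed.
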